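(* Let $v_!:=-\otimes_{k[\Delta_{a,\mathrm{inj}}]}k[\square_{\mathrm{inj}}]$ be left adjoint to $v^\ast$. The unit $\eta_M\colon M\to v^\ast v_!M$ need not induce an isomorphism on $H^a_{-1}$. In fact, for the representable right module $M=k[\Delta_{a,\mathrm{inj}}](-,[0])$ one has $H^a_{-1}(M)=0$, whereas $H^a_{-1}(v^\ast v_!M)\cong k$.
   Context: $k$ is a field; $k[\mathcal C]$ is the $k$-linearization of a small category; right modules over a $k$-linear category are $k$-linear functors from its opposite to $\mathrm{Vect}_k$; for a right module $X$ and $f\colon x\to y$, $X(f)\colon X(y)\to X(x)$. $\Delta_{a,\mathrm{inj}}$: objects $[n]=\{0<\dots<n\}$, $n\ge0$, and $[-1]=\varnothing$, injective order-preserving maps; $\delta^i\colon[n-1]\to[n]$ omits $i$. $\square_{\mathrm{inj}}$: objects $\square_n=\{0,1\}^n$, $n\ge0$, morphisms generated by cofaces $\delta_i^\varepsilon\colon\square_{n-1}\to\square_n$ ($\varepsilon\in\{0,1\}$, $1\le i\le n$) inserting $\varepsilon$ as $i$-th coordinate. The cubical sign embedding $v\colon k[\Delta_{a,\mathrm{inj}}]\to k[\square_{\mathrm{inj}}]$ is $[n]\mapsto\square_{n+1}$, $\delta^i\mapsto\delta^1_{i+1}-\delta^0_{i+1}$; $v^\ast$ is restriction. For a right $k[\Delta_{a,\mathrm{inj}}]$-module $Y$, $H^a_{-1}(Y)=\operatorname{coker}(Y(\delta^0)\colon Y([0])\to Y([-1]))$. *)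

From HB Require Import structures.
From mathcomp Require Import all_boot all_order all_algebra.
Set Implicit Arguments. Unset Strict Implicit. Unset Printing Implicit Defensive.
Import Order.TTheory GRing.Theory Num.Theory.
Local Open Scope ring_scope.

(* The object [n] (n >= -1) is encoded by its cardinality a = n+1 : nat, *)
(* i.e. [n] = 'I_(n+1) = {0 < ... < n}; in particular [-1] = 'I_0.       *)

Definition dinjb (a b : nat) (f : {ffun 'I_a -> 'I_b}) : bool :=
  injectiveb f && [forall i : 'I_a, forall j : 'I_a, (i <= j)%N ==> (f i <= f j)%N].

Definition dhom (a b : nat) := {f : {ffun 'I_a -> 'I_b} | dinjb f}.

Lemma dinjb_delta0 : dinjb ([ffun i : 'I_0 => (ord0 : 'I_1)]).
Proof. by rewrite /dinjb; apply/andP; split; [apply/injectiveP => -[] | apply/forallP => -[]]. Qed.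

Definition delta0 : dhom 0 1 := @exist _ (@dinjb 0 1) _ dinjb_delta0.

(* The representable right k[Delta_{a,inj}]-module M = k[Delta](-,[0]).  *)
(* M(a) = free k-vector space on Delta(a,[0]) (finitely supported = all  *)
(* functions, the hom set being finite); for g : a -> b,                 *)
(* M(g) : M(b) -> M(a) sends the basis element h to h o g.               *)

Definition Mrep (k : fieldType) (a : nat) := {ffun dhom a 1 -> k^o}.

Definition Mact (k : fieldType) (a b : nat) (g : dhom a b) (x : Mrep k b) : Mrep k a :=
  [ffun h : dhom a 1 =>
     \sum_(h' : dhom b 1 | [ffun i => sval h' (sval g i)] == sval h) x h'].

(* paper's coordinate i (1 <= i <= n) is our 0-based index i-1.          *)

Definition cube (n : nat) := {ffun 'I_n -> bool}.

(* coface delta_{i+1}^e : square_n -> square_{n+1}, inserting e as the   *)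
(* (0-based) i-th coordinate.                                            *)
Definition coface (n : nat) (i : 'I_n.+1) (e : bool) (x : cube n) : cube n.+1 :=
  [ffun j => if unlift i j is Some j' then x j' else e].

Inductive cgen : forall m n : nat, {ffun cube m -> cube n} -> Prop :=
| cgen_id n : cgen [ffun x : cube n => x]
| cgen_cf m n (i : 'I_n.+1) (e : bool) (g : {ffun cube m -> cube n}) :
    cgen g -> cgen [ffun x => coface i e (g x)].

(* For convenience the action is given on all set maps cube m -> cube n; *)
(* only its values on morphisms (cgen) are constrained or ever used.     *)
Record cmod (k : fieldType) := CMod {
  cobj : nat -> lmodType k;
  cact : forall m n : nat, {ffun cube m -> cube n} -> {linear cobj n -> cobj m};
  cact_id : forall n (y : cobj n), cact [ffun x : cube n => x] y = y;
  cact_comp : forall l m n (f : {ffun cube l -> cube m}) (g : {ffun cube m -> cube n}),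
      cgen f -> cgen g ->
      forall y, cact [ffun x => g (f x)] y = cact f (cact g y)
}.

Definition is_cmor (k : fieldType) (N X : cmod k) (u : forall n, cobj N n -> cobj X n) :=
  (forall n, linear (u n)) /\
  (forall m n (f : {ffun cube m -> cube n}), cgen f ->
     forall y, u m (cact N f y) = cact X f (u n y)).
Arguments is_cmor {k} N X u.

(* The cubical sign embedding v : k[Delta_{a,inj}] -> k[square_inj],     *)
(* [n] |-> square_{n+1} (i.e. a |-> a with our encoding),               *)
(* delta^i |-> delta^1_{i+1} - delta^0_{i+1}.  On a general morphism    *)
(* g : a -> b (a composite of delta^i's) v(g) is the product of these   *)
(* differences, which expands to                                         *)
(*   v(g) = sum_{eps} (-1)^{#zeros of eps} ins g eps,                    *)
(* eps ranging over the 0/1 values on the complement of the image of g, *)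
(* and ins g eps : square_a -> square_b, x |-> (y_{g i} = x_i, y_j =     *)
(* eps_j for j not in the image).  We encode eps as an element of cube b *)
(* equal to true on the image of g.                                      *)

Definition insmap (a b : nat) (g : dhom a b) (eps : cube b) : {ffun cube a -> cube b} :=
  [ffun x : cube a => [ffun j : 'I_b =>
     if [pick i : 'I_a | sval g i == j] is Some i then x i else eps j]].

Definition vstar_act (k : fieldType) (X : cmod k) (a b : nat) (g : dhom a b)
    (y : cobj X b) : cobj X a :=
  \sum_(eps : cube b | [forall i : 'I_a, eps (sval g i)])
     ((-1) ^+ #|[pred j | ~~ eps j]|) *: cact X (insmap g eps) y.
Arguments vstar_act {k} X {a b} g y.

Definition is_Mmor (k : fieldType) (X : cmod k) (phi : forall a, Mrep k a -> cobj X a) :=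
  (forall a, linear (phi a)) /\
  (forall a b (g : dhom a b) (x : Mrep k b),
     phi a (Mact g x) = vstar_act X g (phi b x)).
Arguments is_Mmor {k} X phi.

(* (N, eta) is v_! M with its unit: eta : M -> v^* N is a universal arrow  *)
(* from M to v^* , i.e. N = v_! M (left adjoint of v^* ) and eta = eta_M.   *)
Definition is_vshriek_of_M (k : fieldType) (N : cmod k)
    (eta : forall a, Mrep k a -> cobj N a) :=
  is_Mmor N eta /\
  forall (X : cmod k) (phi : forall a, Mrep k a -> cobj X a), is_Mmor X phi ->
    (exists u, is_cmor N X u /\ forall a x, u a (eta a x) = phi a x) /\
    (forall u u', is_cmor N X u -> is_cmor N X u' ->
       (forall a x, u a (eta a x) = phi a x) ->
       (forall a x, u' a (eta a x) = phi a x) ->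
       forall n y, u n y = u' n y).
Arguments is_vshriek_of_M {k} N eta.

From HB Require Import structures.
From mathcomp Require Import all_boot all_order all_algebra.
Set Implicit Arguments. Unset Strict Implicit. Unset Printing Implicit Defensive.
Import GRing.Theory.
Local Open Scope ring_scope.

(* The hom sets Delta([-1],[0]) and Delta([0],[0]) are singletons, so M(delta^0)
   is the identity of k and H^a_{-1}(M) = 0.
   By the Yoneda lemma v_! M is the representable R1 = k[square](-, square_1).
   The only morphisms into square_1 are its identity and the two vertices of
   square_0, so R1(square_0) = k^2 and (v^*R1)(delta^0) = R1(delta^1_1) - R1(delta^0_1)
   has image the line spanned by (1, -1): the sum of coordinates identifies the
   cokernel with k.  For an abstract v_! M = N with unit eta we only use that
   universality gives a module map u : N -> R1 which is a section of the map
   R1 -> N classifying eta of the generator; this retraction transports the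
   cokernel from R1 to N. *)

Section LinearOf.
Variables (k : fieldType) (U V : lmodType k) (f : U -> V) (f_lin : linear f).

Definition lin_of of linear f : U -> V := f.
HB.instance Definition _ := GRing.isLinear.Build k U V _ (lin_of f_lin) f_lin.

Lemma lin_sum I r (P : pred I) (F : I -> U) :
  f (\sum_(i <- r | P i) F i) = \sum_(i <- r | P i) f (F i).
Proof. exact: (linear_sum (lin_of f_lin)). Qed.

Lemma lin_Z c x : f (c *: x) = c *: f x.
Proof. exact: (linearZ_LR (lin_of f_lin)). Qed.

Lemma lin_D x y : f (x + y) = f x + f y.
Proof. exact: (linearD (lin_of f_lin)). Qed.

End LinearOf.

Lemma sum_unique (R : nmodType) (T : finType) (t : T) (P : pred T) (F : T -> R) :
  (forall u, u = t) -> \sum_(i | P i) F i = if P t then F t else 0.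
Proof. by move=> Tt; rewrite big_mkcond (big_pred1 t) // => u; rewrite /= (Tt u) eqxx. Qed.

Lemma ord_leq1_eq n (n_le1 : (n <= 1)%N) (i j : 'I_n) : i = j.
Proof.
apply/val_inj; case: i j => [i lt_in] [j lt_jn] /=.
have := leq_trans lt_in n_le1; have := leq_trans lt_jn n_le1.
by rewrite !ltnS !leqn0 => /eqP -> /eqP ->.
Qed.

Lemma cube0_eq (x y : cube 0) : x = y.
Proof. by apply/ffunP => -[]. Qed.

Definition cube0 : cube 0 := [ffun i => false].

Lemma cube1_sum (R : nmodType) (F : cube 1 -> R) :
  \sum_(e : cube 1) F e = F [ffun _ => true] + F [ffun _ => false].
Proof.
rewrite (bigD1 [ffun _ => true]) // (bigD1 [ffun _ => false]) //=; last first.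
  by apply/eqP => /ffunP /(_ ord0); rewrite !ffunE.
rewrite big1 ?addr0 // => e /andP[e_t e_f].
have eE : e = [ffun _ => e ord0] by apply/ffunP => j; rewrite ffunE ord1.
by move: e_t e_f; rewrite eE; case: (e ord0); rewrite eqxx // andbF.
Qed.

Lemma cgen_leq m n (g : {ffun cube m -> cube n}) : cgen g -> (m <= n)%N.
Proof. by elim=> // m' n' i e g' _ /leqW. Qed.

Lemma cgen_coordE m n (g : {ffun cube m -> cube n}) : cgen g -> (n <= m)%N ->
  forall x (i : 'I_n) (j : 'I_m), val i = val j -> g x i = x j.
Proof.
case=> [n' | m' n' i e g' cg'] le_nm.
  by move=> x i j /val_inj ->; rewrite ffunE.
by have := cgen_leq cg'; rewrite leqNgt (leq_trans _ le_nm).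
Qed.

(* The morphisms square_n -> square_1 of square_inj: the two vertices for
   n = 0 and the identity for n = 1. *)
Definition cgen1b n (h : {ffun cube n -> cube 1}) : bool :=
  (n <= 1)%N && [forall x, forall i : 'I_n, h x ord0 == x i].

Definition cgen1 n := {h : {ffun cube n -> cube 1} | cgen1b h}.

Lemma cgen1b_cgen n (h : {ffun cube n -> cube 1}) : cgen1b h -> cgen h.
Proof.
case: n h => [|[|n]] h /andP[// n_le1 /forallP hE].
  have -> : h = [ffun x => coface ord0 (h cube0 ord0) ([ffun x : cube 0 => x] x)].
    apply/ffunP => x; apply/ffunP => j.
    by rewrite !ffunE ord1 (cube0_eq x cube0) unlift_none.
  exact: (cgen_cf _ _ (cgen_id 0)).
have -> : h = [ffun x : cube 1 => x].
  by apply/ffunP => x; apply/ffunP => j; rewrite ffunE ord1; exact/eqP/(forallP (hE x)).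
exact: cgen_id.
Qed.

Lemma cgen1b_comp m n (f : {ffun cube m -> cube n}) (h : {ffun cube n -> cube 1}) :
  cgen f -> cgen1b h -> cgen1b [ffun x => h (f x)].
Proof.
move=> cf /andP[n_le1 /forallP hE]; have le_mn := cgen_leq cf.
apply/andP; split; first exact: leq_trans n_le1.
apply/forallP => x; apply/forallP => i; rewrite ffunE.
have m_gt0 : (0 < m)%N := leq_ltn_trans (leq0n i) (ltn_ord i).
have n_gt0 : (0 < n)%N := leq_trans m_gt0 le_mn.
have eq_nm : n = m by apply/eqP; rewrite eqn_leq le_mn (leq_trans n_le1 m_gt0).
rewrite (eqP (forallP (hE (f x)) (Ordinal n_gt0))).
rewrite (@cgen_coordE _ _ _ cf _ x (Ordinal n_gt0) i) ?eq_nm //=.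
by apply/esym/eqP; rewrite -leqn0 -ltnS (leq_trans (ltn_ord i)) // -eq_nm.
Qed.

Lemma cgen1b0 (h : {ffun cube 0 -> cube 1}) : cgen1b h.
Proof. by apply/andP; split => //; apply/forallP => x; apply/forallP => -[]. Qed.

Definition vertex (b : bool) : cgen1 0 :=
  exist (fun h => cgen1b h) [ffun=> [ffun=> b]] (cgen1b0 _).

Lemma cgen1_0E (h : cgen1 0) : h = vertex (sval h cube0 ord0).
Proof.
apply/val_inj; apply/ffunP => x; apply/ffunP => j.
by rewrite /= !ffunE (cube0_eq x cube0) ord1.
Qed.

Lemma cgen1b_id : cgen1b [ffun x : cube 1 => x].
Proof.
apply/andP; split => //; apply/forallP => x; apply/forallP => i.
by rewrite ffunE (ord1 i).
Qed.

Definition cgen1_id : cgen1 1 := exist (fun h => cgen1b h) _ cgen1b_id.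

Lemma cgen1_1E (h : cgen1 1) : h = cgen1_id.
Proof.
case: h => h /[dup] /andP[_ /forallP hE] hP.
apply/val_inj; apply/ffunP => x; apply/ffunP => j.
by rewrite /= ffunE (ord1 j); apply/eqP/(forallP (hE x) ord0).
Qed.

Lemma sum_cgen1_0 (R : nmodType) (F : cgen1 0 -> R) :
  \sum_(h : cgen1 0) F h = F (vertex true) + F (vertex false).
Proof.
rewrite (bigD1 (vertex true)) // (bigD1 (vertex false)) //=; last first.
  by apply/eqP => /(congr1 val) /ffunP /(_ cube0) /ffunP /(_ ord0); rewrite !ffunE.
rewrite big1 ?addr0 // => h /andP[h_t h_f].
by move: h_t h_f; rewrite (cgen1_0E h); case: (sval h cube0 ord0); rewrite eqxx // andbF.
Qed.

Lemma sum_cgen1_val (R : nmodType) n (F : {ffun cube n -> cube 1}) (FP : cgen1b F)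
    (G : cgen1 n -> R) :
  \sum_(h : cgen1 n | F == val h) G h = G (exist _ F FP).
Proof. by apply: big_pred1 => h; rewrite /= -val_eqE /= eq_sym. Qed.

Lemma dhom_leq a b (g : dhom a b) : (a <= b)%N.
Proof.
case: g => g /andP[/injectiveP g_inj _].
by have := @leq_card _ _ g g_inj; rewrite !card_ord.
Qed.

Lemma dhom_leq1_eq a b (b_le1 : (b <= 1)%N) (g g' : dhom a b) : g = g'.
Proof. by apply/val_inj; apply/ffunP => i; apply: ord_leq1_eq. Qed.

Lemma dinjb_id1 : dinjb [ffun i : 'I_1 => i].
Proof.
apply/andP; split; first by apply/injectiveP => i j; rewrite !ffunE.
by apply/forallP => i; apply/forallP => j; rewrite !ffunE; apply/implyP.
Qed.

Definition did1 : dhom 1 1 := exist (fun f => @dinjb 1 1 f) _ dinjb_id1.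

Lemma insmap_cgen1b a (g : dhom a 1) eps : cgen1b (insmap g eps).
Proof.
apply/andP; split; first exact: dhom_leq g.
apply/forallP => x; apply/forallP => i; rewrite !ffunE.
case: pickP => [i' _ | none]; first by rewrite (ord_leq1_eq (dhom_leq g) i' i).
by move: (none i) => /=; rewrite (ord1 (sval g i)) eqxx.
Qed.

Lemma insmap_cgen a (g : dhom a 1) eps : cgen (insmap g eps).
Proof. exact/cgen1b_cgen/insmap_cgen1b. Qed.

Lemma insmap_delta0 eps : insmap delta0 eps = [ffun x => eps].
Proof. by apply/ffunP => x; apply/ffunP => j; rewrite !ffunE; case: pickP => [[] | _]. Qed.

Section Modules.
Variable k : fieldType.

Lemma vstar_act_is_linear (X : cmod k) a b (g : dhom a b) : linear (vstar_act X g).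
Proof.
move=> c y z; rewrite /vstar_act scaler_sumr -big_split /=.
by apply: eq_bigr => eps _; rewrite linearD linearZ /= scalerDr !scalerA mulrC.
Qed.

HB.instance Definition _ (X : cmod k) a b (g : dhom a b) :=
  GRing.isLinear.Build k (cobj X b) (cobj X a) _ (vstar_act X g) (vstar_act_is_linear g).

Lemma vstar_act_id (X : cmod k) n (g : dhom n n) (gE : forall i, sval g i = i) y :
  vstar_act X g y = y.
Proof.
rewrite /vstar_act (big_pred1 [ffun _ => true]); last first.
  move=> eps /=; apply/forallP/eqP => [epsE | -> i]; last by rewrite ffunE.
  by apply/ffunP => i; rewrite ffunE -(gE i) epsE.
rewrite (eq_card0 (A := [pred j | ~~ [ffun _ => true] j])); last first.
  by move=> j; rewrite !inE ffunE.
rewrite expr0 scale1r.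
have -> : insmap g [ffun _ => true] = [ffun x : cube n => x].
  apply/ffunP => x; apply/ffunP => j; rewrite !ffunE.
  case: pickP => [i /eqP <- | none]; first by rewrite gE.
  by move: (none j); rewrite gE eqxx.
exact: cact_id.
Qed.

Lemma cmor_vstar_act (X Y : cmod k) (u : forall n, cobj X n -> cobj Y n) a
    (g : dhom a 1) y :
  is_cmor X Y u -> u a (vstar_act X g y) = vstar_act Y g (u 1%N y).
Proof.
move=> [u_lin u_nat]; rewrite /vstar_act (lin_sum (u_lin a)).
by apply: eq_bigr => eps _; rewrite (lin_Z (u_lin a)) u_nat //; exact: insmap_cgen.
Qed.

Lemma vstar_act_im_retract (X Y : cmod k) (u : forall n, cobj X n -> cobj Y n)
    (w : forall n, cobj Y n -> cobj X n) a (g : dhom a 1) :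
  is_cmor X Y u -> is_cmor Y X w -> (forall n y, w n (u n y) = y) ->
  forall y, (exists x, vstar_act X g x = y) <-> (exists z, vstar_act Y g z = u a y).
Proof.
move=> uc wc wuK y; split=> [[x <-] | [z zE]].
  by exists (u 1%N x); rewrite cmor_vstar_act.
by exists (w 1%N z); rewrite -cmor_vstar_act // zE wuK.
Qed.

Definition Mgen : Mrep k 1 := [ffun _ => 1].

Lemma Mact_Mgen a (g : dhom a 1) : Mact g Mgen = [ffun h => (h == g)%:R].
Proof.
apply/ffunP => h; rewrite !ffunE (sum_unique (t := did1)); last first.
  by move=> u; apply: dhom_leq1_eq.
rewrite ffunE; have -> : [ffun i => sval did1 (sval g i)] = sval g.
  by apply/ffunP => i; rewrite !ffunE.
by rewrite val_eqE eq_sym; case: eqP.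
Qed.

Lemma Mrep_decomp a (x : Mrep k a) : x = \sum_(g : dhom a 1) x g *: Mact g Mgen.
Proof.
apply/ffunP => h; rewrite sum_ffunE (bigD1 h) //= big1 ?addr0.
  by rewrite ffunE Mact_Mgen ffunE eqxx; exact: (esym (mulr1 _)).
by move=> g ng; rewrite ffunE Mact_Mgen ffunE eq_sym (negPf ng); exact: mulr0.
Qed.

Lemma Mmor_decomp (X : cmod k) phi a x : is_Mmor X phi ->
  phi a x = \sum_(g : dhom a 1) x g *: vstar_act X g (phi 1%N Mgen).
Proof.
move=> [phi_lin phi_nat]; rewrite {1}(Mrep_decomp x) (lin_sum (phi_lin a)).
by apply: eq_bigr => g _; rewrite (lin_Z (phi_lin a)) phi_nat.
Qed.

Lemma Mact_delta0_surj (y : Mrep k 0) : exists x : Mrep k 1, Mact delta0 x = y.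
Proof.
exists [ffun _ => y delta0]; apply/ffunP => h.
rewrite ffunE (sum_unique (t := did1)); last by move=> u; apply: dhom_leq1_eq.
have -> : [ffun i => sval did1 (sval delta0 i)] == sval h by apply/eqP/ffunP => -[].
by rewrite ffunE (dhom_leq1_eq (leqnn 1) h delta0).
Qed.

Definition Robj (n : nat) : lmodType k := {ffun cgen1 n -> k^o}.

Definition Ract_fun m n (f : {ffun cube m -> cube n}) (y : Robj n) : Robj m :=
  [ffun h : cgen1 m => \sum_(h' : cgen1 n | [ffun x => val h' (f x)] == val h) y h'].

Lemma Ract_is_linear m n f : linear (@Ract_fun m n f).
Proof.
move=> c y z; apply/ffunP => h; rewrite !ffunE scaler_sumr -big_split /=.
by apply: eq_bigr => h' _; rewrite !ffunE.
Qed.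

Definition Ract m n f : {linear Robj n -> Robj m} := lin_of (@Ract_is_linear m n f).

Lemma RactE m n (f : {ffun cube m -> cube n}) (y : Robj n) h :
  Ract f y h = \sum_(h' : cgen1 n | [ffun x => val h' (f x)] == val h) y h'.
Proof. by rewrite ffunE. Qed.

Lemma Ract_id n (y : Robj n) : Ract [ffun x : cube n => x] y = y.
Proof.
apply/ffunP => h; rewrite RactE (big_pred1 h) // => h'.
by rewrite /= -val_eqE /=; congr (_ == _); apply/ffunP => x; rewrite !ffunE.
Qed.

Lemma Ract_comp l m n (f : {ffun cube l -> cube m}) (g : {ffun cube m -> cube n}) :
  cgen f -> cgen g -> forall y, Ract [ffun x => g (f x)] y = Ract f (Ract g y).
Proof.
move=> cf cg y; apply/ffunP => h; rewrite !RactE.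
under [RHS]eq_bigr do rewrite RactE.
rewrite (exchange_big_dep xpredT) //= big_mkcond /=; apply: eq_bigr => h' _.
rewrite big_mkcondl /= (sum_cgen1_val (cgen1b_comp cg (valP h'))) /=.
by congr (if _ then _ else _); congr (_ == _); apply/ffunP => x; rewrite !ffunE.
Qed.

Definition R1 : cmod k := CMod Ract_id Ract_comp.

Definition Rgen : Robj 1 := [ffun _ => 1].

Definition unit_R1 a (x : Mrep k a) : Robj a :=
  \sum_(g : dhom a 1) x g *: vstar_act R1 g Rgen.

Lemma unit_R1_is_linear a : linear (@unit_R1 a).
Proof.
move=> c x y; rewrite /unit_R1 scaler_sumr -big_split /=; apply: eq_bigr => g _.
by rewrite !ffunE scalerDl scalerA.
Qed.

HB.instance Definition _ a :=
  GRing.isLinear.Build k (Mrep k a) (Robj a) _ (@unit_R1 a) (@unit_R1_is_linear a).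

Lemma unit_R1_Mgen : unit_R1 Mgen = Rgen.
Proof.
rewrite /unit_R1 (sum_unique (t := did1)); last by move=> u; apply: dhom_leq1_eq.
by rewrite /= ffunE scale1r vstar_act_id // => i; apply: ord_leq1_eq.
Qed.

Lemma unit_R1_endo n (n_le1 : (n <= 1)%N) (g : dhom n n) x :
  unit_R1 (Mact g x) = vstar_act R1 g (unit_R1 x).
Proof.
have gE i : sval g i = i by apply: ord_leq1_eq.
rewrite vstar_act_id //; congr unit_R1; apply/ffunP => h.
rewrite ffunE (big_pred1 h) // => h'.
by rewrite /= -val_eqE /=; congr (_ == _); apply/ffunP => i; rewrite ffunE gE.
Qed.

Lemma unit_R1_Mmor : is_Mmor R1 unit_R1.
Proof.
split; first exact: unit_R1_is_linear.
move=> a [|[|b]] g x.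
- by case: a g (dhom_leq g) => // g _; exact: unit_R1_endo.
- case: a g (dhom_leq g) => [|[|//]] g _; last exact: unit_R1_endo.
  rewrite /unit_R1 (sum_unique (t := g)); last by move=> u; apply: dhom_leq1_eq.
  rewrite (sum_unique (t := did1)); last by move=> u; apply: dhom_leq1_eq.
  rewrite linearZ vstar_act_id; last by move=> i; apply: ord_leq1_eq.
  rewrite /= !ffunE.
  rewrite (sum_unique (t := did1)); last by move=> u; apply: dhom_leq1_eq.
  by have -> : [ffun i => sval did1 (sval g i)] == sval g by apply/eqP/ffunP => -[].
- have no_hom (h : dhom b.+2 1) : False by have := dhom_leq h.
  have -> : Mact g x = 0.
    by apply/ffunP => h; rewrite !ffunE big1 // => h'; case: (no_hom h').
  have -> : unit_R1 x = 0 by rewrite /unit_R1 big1 // => h'; case: (no_hom h').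
  by rewrite !linear0.
Qed.

Definition Rclass (N : cmod k) (E : cobj N 1) n (y : Robj n) : cobj N n :=
  \sum_(h : cgen1 n) y h *: cact N (val h) E.

Lemma Rclass_is_linear (N : cmod k) (E : cobj N 1) n : linear (@Rclass N E n).
Proof.
move=> c y z; rewrite /Rclass scaler_sumr -big_split /=; apply: eq_bigr => h _.
by rewrite !ffunE scalerDl scalerA.
Qed.

HB.instance Definition _ (N : cmod k) (E : cobj N 1) n :=
  GRing.isLinear.Build k (Robj n) (cobj N n) _ (@Rclass N E n) (@Rclass_is_linear N E n).

Lemma Rclass_cmor (N : cmod k) (E : cobj N 1) : is_cmor R1 N (Rclass E).
Proof.
split=> [n | m n f cf y]; first exact: Rclass_is_linear.
rewrite /Rclass /=.
under eq_bigr do rewrite RactE scaler_suml.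
rewrite (exchange_big_dep xpredT) //= linear_sum; apply: eq_bigr => h' _.
rewrite (sum_cgen1_val (cgen1b_comp cf (valP h'))) /= linearZ /= cact_comp //.
exact: cgen1b_cgen (valP h').
Qed.

Lemma Rclass_Rgen (N : cmod k) (E : cobj N 1) : Rclass E Rgen = E.
Proof.
rewrite /Rclass (sum_unique (t := cgen1_id)); last by move=> u; apply: cgen1_1E.
by rewrite /= ffunE scale1r cact_id.
Qed.

Lemma vshriek_retract_R1 (N : cmod k) (eta : forall a, Mrep k a -> cobj N a) :
  is_vshriek_of_M N eta ->
  exists u, [/\ is_cmor N R1 u, u 1%N (eta 1%N Mgen) = Rgen
              & forall n y, Rclass (eta 1%N Mgen) (u n y) = y].
Proof.
move=> [eta_Mmor univ]; set E := eta 1%N Mgen.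
have [[u [uc u_eta]] _] := univ _ _ unit_R1_Mmor.
have Rclass_unit a x : Rclass E (unit_R1 x) = eta a x.
  rewrite (Mmor_decomp x eta_Mmor) /unit_R1 linear_sum; apply: eq_bigr => g _.
  by rewrite linearZ /= (cmor_vstar_act _ _ (Rclass_cmor E)) Rclass_Rgen.
have wu_cmor : is_cmor N N (fun n y => Rclass E (u n y)).
  split=> [m c y z | m m' f cf y]; last by rewrite uc.2 // (Rclass_cmor E).2.
  by rewrite /= (lin_D (uc.1 m)) (lin_Z (uc.1 m)) linearD linearZ.
have id_cmor : is_cmor N N (fun n y => y) by split => // m c y z.
exists u; split=> //; first by rewrite u_eta unit_R1_Mgen.
move=> n y; apply: ((univ N eta eta_Mmor).2 _ _ wu_cmor id_cmor) => // a x.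
by rewrite /= u_eta Rclass_unit.
Qed.

Definition Rsum (y : Robj 0) : k^o := \sum_(h : cgen1 0) y h.

Lemma Rsum_is_linear : linear Rsum.
Proof.
move=> c y z; rewrite /Rsum scaler_sumr -big_split.
by apply: eq_bigr => h _; rewrite !ffunE.
Qed.

HB.instance Definition _ := GRing.isLinear.Build k (Robj 0) k^o _ Rsum Rsum_is_linear.

Lemma Rsum_Ract (f : {ffun cube 0 -> cube 1}) (z : Robj 1) :
  Rsum (Ract f z) = \sum_(h' : cgen1 1) z h'.
Proof.
rewrite /Rsum; under eq_bigr do rewrite RactE.
rewrite (exchange_big_dep xpredT) //=; apply: eq_bigr => h' _.
by rewrite (sum_cgen1_val (cgen1b0 _)).
Qed.

Lemma sign_true : (-1) ^+ #|[pred j : 'I_1 | ~~ [ffun _ => true] j]| = 1 :> k.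
Proof.
rewrite (eq_card0 (A := [pred j : 'I_1 | ~~ [ffun _ => true] j])) //.
by move=> j; rewrite !inE ffunE.
Qed.

Lemma sign_false : (-1) ^+ #|[pred j : 'I_1 | ~~ [ffun _ => false] j]| = -1 :> k.
Proof.
rewrite (@eq_card1 _ ord0 [pred j : 'I_1 | ~~ [ffun _ => false] j]) ?expr1 // => j.
by rewrite !inE ffunE (ord1 j) eqxx.
Qed.

Lemma vstar_act_delta0E (X : cmod k) (z : cobj X 1) :
  vstar_act X delta0 z
  = cact X [ffun=> [ffun=> true]] z - cact X [ffun=> [ffun=> false]] z.
Proof.
rewrite /vstar_act (eq_bigl xpredT); last by move=> eps; apply/forallP => -[].
by rewrite cube1_sum !insmap_delta0 sign_true sign_false scale1r scaleN1r.
Qed.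

Lemma Rsum_vstar_delta0 (z : Robj 1) : Rsum (vstar_act R1 delta0 z) = 0.
Proof. by rewrite vstar_act_delta0E linearB /= !Rsum_Ract subrr. Qed.

Lemma Rsum_Ract_Rgen (f : {ffun cube 0 -> cube 1}) : Rsum (Ract f Rgen) = 1.
Proof.
rewrite Rsum_Ract (sum_unique (t := cgen1_id)); last by move=> h; apply: cgen1_1E.
by rewrite ffunE.
Qed.

Lemma Ract_Rgen (f : {ffun cube 0 -> cube 1}) h : Ract f Rgen h = (f == val h)%:R.
Proof.
rewrite RactE (sum_unique (t := cgen1_id)); last by move=> u; apply: cgen1_1E.
rewrite /= ffunE; have -> : [ffun x => sval cgen1_id (f x)] = f.
  by apply/ffunP => x; rewrite !ffunE.
by case: eqP.
Qed.

Lemma vstar_act_delta0_Rgen (b : bool) :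
  vstar_act R1 delta0 Rgen (vertex b) = if b then 1 else -1.
Proof.
rewrite vstar_act_delta0E ffunE [X in _ + X]ffunE !Ract_Rgen /=.
have vertexE e :
    ([ffun=> [ffun=> e]] == [ffun=> [ffun=> b]] :> {ffun cube 0 -> cube 1}) = (e == b).
  apply/eqP/eqP => [/ffunP/(_ cube0)/ffunP/(_ ord0) | ->] //.
  by rewrite !ffunE.
by rewrite !vertexE; case: (b); rewrite /= ?subr0 ?sub0r.
Qed.

Lemma Rsum_eq0P (y : Robj 0) :
  Rsum y = 0 <-> exists z, vstar_act R1 delta0 z = y.
Proof.
split=> [| [z <-]]; last exact: Rsum_vstar_delta0.
rewrite /Rsum sum_cgen1_0 => /eqP; rewrite addr_eq0 => /eqP y_false.
exists (y (vertex true) *: Rgen); rewrite linearZ /=.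
apply/ffunP => h; rewrite ffunE (cgen1_0E h) vstar_act_delta0_Rgen.
by case: (sval h cube0 ord0); last rewrite y_false scaleNr scalerN opprK; exact: mulr1.
Qed.

End Modules.

Theorem proposition4p6 (k : fieldType) :
  (forall y : Mrep k 0, exists x : Mrep k 1, Mact delta0 x = y) /\
  (forall (N : cmod k) (eta : forall a, Mrep k a -> cobj N a),
     is_vshriek_of_M N eta ->
     exists psi : {linear cobj N 0 -> k^o},
       (forall c : k, exists y, psi y = c) /\
       (forall y, psi y = 0 <-> exists x : cobj N 1, vstar_act N delta0 x = y)).
Proof.
split=> [|N eta vshriek]; first exact: Mact_delta0_surj.
have [u [uc u_gen Rclass_uK]] := vshriek_retract_R1 vshriek.
exists (@Rsum k \o lin_of (uc.1 0%N)); split=> [c | y].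
  exists (c *: cact N (val (vertex true)) (eta 1%N (Mgen k))).
  rewrite linearZ /= /lin_of uc.2 ?u_gen; last exact: cgen1b_cgen (cgen1b0 _).
  by rewrite Rsum_Ract_Rgen; exact: mulr1.
rewrite -[_ y]/(Rsum (u 0%N y)); apply: iff_trans (Rsum_eq0P _) _.
exact: iff_sym (vstar_act_im_retract delta0 uc (Rclass_cmor _) Rclass_uK y).
Qed.
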